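(* For every partition $\lambda$, $\tau_{p_\lambda}(x)=x^{\ell(\lambda)}(x-1)^{|\lambda|-\ell(\lambda)}$.
   Context: $p_\lambda=p_{\lambda_1}\cdots p_{\lambda_{\ell(\lambda)}}$ with $p_n=\sum_i x_i^n$ (power-sum symmetric functions); $|\lambda|$ is the size and $\ell(\lambda)$ the number of parts of $\lambda$. $P_\lambda$ is the disjoint union of paths with $\lambda_1,\dots,\lambda_{\ell(\lambda)}$ vertices, $X_G$ the chromatic symmetric function, and $\{X_{P_\lambda}\}$ is a basis of the symmetric functions over $\mathbb{Q}$. For $f=\sum_\lambda a_\lambda X_{P_\lambda}$, $\tau_f(x)=\sum_\lambda a_\lambda x^{\ell(\lambda)}$. *)

From HB Require Import structures.
From mathcomp Require Import all_boot all_algebra.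
From mathcomp Require Import mpoly.

Set Implicit Arguments.
Unset Strict Implicit.
Unset Printing Implicit Defensive.

Import GRing.Theory.
Local Open Scope ring_scope.

(* A partition: a weakly decreasing sequence of positive integers.
   |lambda| = sumn lambda, l(lambda) = size lambda. *)
Definition is_partition (l : seq nat) : bool :=
  sorted geq l && all (fun k => 0 < k)%N l.

(* Vertices of P_mu: pairs (i, j) with i < l(mu), j < mu_i
   (the j-th vertex of the i-th path). *)
Definition pathvert (mu : seq nat) : Type :=
  {x : 'I_(size mu) * 'I_(sumn mu) | (x.2 < nth 0 mu x.1)%N}.

Definition pathadj (mu : seq nat) : rel (pathvert mu) :=
  fun u v => ((val u).1 == (val v).1) &&
             ((((val u).2).+1 == (val v).2)%N || (((val v).2).+1 == (val u).2)%N).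

Definition chromsym (N : nat) (V : finType) (e : rel V) : {mpoly rat[N]} :=
  \sum_(k : {ffun V -> 'I_N} | [forall u, forall v, e u v ==> (k u != k v)])
     \prod_(v : V) 'X_(k v).

Definition XP (N : nat) (mu : seq nat) : {mpoly rat[N]} :=
  @chromsym N (pathvert mu) (@pathadj mu).

Definition psum (N k : nat) : {mpoly rat[N]} := \sum_(i < N) 'X_i ^+ k.
Definition powersum (N : nat) (l : seq nat) : {mpoly rat[N]} :=
  \prod_(k <- l) psum N k.

From HB Require Import structures.
From mathcomp Require Import all_boot all_algebra.
From mathcomp Require Import mpoly zify ring.

Set Implicit Arguments.
Unset Strict Implicit.
Unset Printing Implicit Defensive.

(* Put x_i = y for the first M <= N variables and x_i = 0 for the others.
   Then p_lambda becomes M^l(lambda) y^|lambda|, and X_{P_mu} becomes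
   chi_mu(M) y^|mu|, where chi_mu(t) = t^l(mu) (t - 1)^(|mu| - l(mu)) counts the
   proper M-colourings of the forest P_mu.  For fixed y both sides are
   polynomials in M of degree at most N that agree at M = 0, ..., N, hence
     sum_mu a_mu y^|mu| chi_mu(t) = y^|lambda| t^l(lambda).
   Substituting y = x - 1 and t = x / (x - 1) turns y^|mu| chi_mu(t) into
   x^l(mu) and the right-hand side into x^l(lambda) (x - 1)^(|lambda| - l(lambda)). *)

Lemma card_ord_ltn N M : M <= N -> #|[pred t : 'I_N | t < M]| = M.
Proof.
move=> leMN; rewrite -sum1_card -[RHS](card_ord M) -sum1_card.
by rewrite (big_ord_widen N (fun _ => 1) leMN).
Qed.

Lemma card_ord_ltn_neq N M (a : 'I_N) :
  M <= N -> a < M -> #|[pred t : 'I_N | (t < M) && (t != a)]| = M.-1.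
Proof.
move=> leMN ltaM; have := cardD1 a [pred t : 'I_N | t < M].
rewrite card_ord_ltn // inE ltaM add1n => {2}->.
by apply: eq_card => t; rewrite !inE andbC.
Qed.

Section ForestColorings.

Variables (V : finType) (N M : nat) (par : V -> V) (root : pred V) (rank : V -> nat).
Hypothesis rank_par : forall v, ~~ root v -> rank (par v) < rank v.
Hypothesis leq_MN : M <= N.

(* Outside A the colours are unconstrained: this keeps the type of colourings
   fixed while A shrinks, at the price of the factor N ^ #|~: A| below. *)
Definition forest_coloring (A : {set V}) (c : {ffun V -> 'I_N}) : bool :=
  [forall u in A, (c u < M) && (~~ root u ==> (c u != c (par u)))].

Definition recolor (c : {ffun V -> 'I_N}) v (t : 'I_N) : {ffun V -> 'I_N} :=
  [ffun u => if u == v then t else c u].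

Lemma par_neq v : ~~ root v -> par v != v.
Proof. by move=> /rank_par; apply: contraTneq => ->; rewrite ltnn. Qed.

Section Leaf.

Variables (A : {set V}) (v : V).
Hypothesis Av : v \in A.
Hypothesis par_closed : forall u, u \in A -> ~~ root u -> par u \in A.
Hypothesis leaf : forall u, u \in A -> ~~ root u -> par u != v.

Lemma forest_coloring_recolor c t :
  forest_coloring A (recolor c v t) =
  forest_coloring (A :\ v) c && ((t < M) && (~~ root v ==> (t != c (par v)))).
Proof.
rewrite /forest_coloring; apply/forall_inP/andP => [ok|[/forall_inP ok /andP[ltM neq]]].
- split.
  + apply/forall_inP => u /setD1P[uv Au]; have := ok u Au.
    rewrite !ffunE (negbTE uv); case: (boolP (root u)) => //= ru.
    by rewrite (negbTE (leaf Au ru)).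
  + have := ok v Av; rewrite !ffunE eqxx.
    by case: (boolP (root v)) => //= rv; rewrite (negbTE (leaf Av rv)).
- move=> u Au; rewrite !ffunE; case: (eqVneq u v) => [->|uv].
  + by rewrite ltM; case: (boolP (root v)) neq => //= rv; rewrite (negbTE (leaf Av rv)).
  + have := ok u; rewrite !inE uv Au => /(_ isT).
    by case: (boolP (root u)) => //= ru; rewrite (negbTE (leaf Au ru)).
Qed.

Lemma card_forest_coloring_leaf :
  N * #|[set c | forest_coloring A c]| =
  (if root v then M else M.-1) * #|[set c | forest_coloring (A :\ v) c]|.
Proof.
rewrite -!sum1dep_card big_mkcond [in RHS]big_mkcond !big_distrr /=.
transitivity (\sum_c \sum_(t : 'I_N) (forest_coloring A c : nat)).
  by apply: eq_bigr => c _; rewrite sum_nat_const card_ord; case: forest_coloring.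
(* Reindexing pairs (c, t) by this involution frees the colour of v in c. *)
have swapK : involutive (fun p => (recolor p.1 v p.2, p.1 v)).
  move=> [c t] /=; rewrite ffunE eqxx; congr (_, _).
  by apply/ffunP => u; rewrite !ffunE; case: eqVneq => // ->.
rewrite pair_bigA /= (reindex_inj (inv_inj swapK)) /=.
rewrite -(pair_bigA _ (fun c t => forest_coloring A (recolor c v t) : nat)) /=.
apply: eq_bigr => c _.
under eq_bigr do rewrite forest_coloring_recolor.
case: (boolP (forest_coloring (A :\ v) c)) => okc /=; last by rewrite big1 ?muln0.
rewrite muln1; case: (boolP (root v)) => rv /=.
  rewrite -[in RHS](card_ord_ltn leq_MN) -sum1_card [RHS]big_mkcond /=.
  by apply: eq_bigr => t _; rewrite !inE andbT.
have ltpM : c (par v) < M.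
  by move/forall_inP: okc => /(_ (par v)); rewrite !inE par_neq // par_closed // => /(_ isT) /andP[].
rewrite -(card_ord_ltn_neq leq_MN ltpM) -sum1_card [RHS]big_mkcond /=.
by apply: eq_bigr => t _; rewrite !inE.
Qed.

End Leaf.

Lemma card_forest_colorings (A : {set V}) :
  (forall u, u \in A -> ~~ root u -> par u \in A) ->
  #|[set c | forest_coloring A c]| =
  M ^ #|[set u in A | root u]| * M.-1 ^ #|[set u in A | ~~ root u]| * N ^ #|~: A|.
Proof.
have [n] := ubnP #|A|; elim: n A => // n IH A ltAn closedA.
case: (set_0Vmem A) => [->|[u0 Au0]].
  have all_ok c : forest_coloring set0 c by apply/forall_inP => u; rewrite inE.
  have empty (P : pred V) : [set u in set0 | P u] = set0 by apply/setP => u; rewrite !inE.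
  rewrite setC0 cardsT !empty cards0 !expn0 !mul1n -[in RHS](card_ord N) -card_ffun.
  by apply: eq_card => c; rewrite inE all_ok.
(* A vertex of maximal rank is a leaf of the forest induced on A. *)
have [v Av0 rank_max] := arg_maxnP rank Au0.
have Av : v \in A := Av0.
have leaf u : u \in A -> ~~ root u -> par u != v.
  by move=> Au /rank_par; apply: contraTneq => ->; rewrite -leqNgt; apply: rank_max.
have closedAv u : u \in A :\ v -> ~~ root u -> par u \in A :\ v.
  by move=> /setD1P[_ Au] ru; rewrite !inE leaf // closedA.
have split_v (P : pred V) : #|[set u in A | P u]| = P v + #|[set u in A :\ v | P u]|.
  rewrite (cardsD1 v [set u in A | P u]) !inE Av /=; congr (_ + _).
  by apply: eq_card => u; rewrite !inE andbA.
have cardC_v : #|~: (A :\ v)| = #|~: A|.+1.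
  by rewrite setDE setCI setCK setUC cardsU1 !inE Av.
have key := card_forest_coloring_leaf Av closedA leaf.
have ltAv_n : #|A :\ v| < n by move: ltAn; rewrite (cardsD1 v A) Av.
rewrite (IH (A :\ v)) // in key; rewrite !split_v.
case: (posnP N) => [N0|N_gt0].
  have M0 : M = 0 by lia.
  have -> : #|[set c | forest_coloring A c]| = 0.
    have V_gt0 : 0 < #|V| by apply/card_gt0P; exists v.
    apply/eqP; rewrite -leqn0 -(exp0n V_gt0) -N0.
    by rewrite -[N in N ^ _](card_ord N) -card_ffun max_card.
  by rewrite M0; case: (root v); rewrite /= ?add1n ?expnS ?(mul0n, muln0).
apply/eqP; rewrite -(eqn_pmul2l N_gt0) key cardC_v.
by case: (root v); rewrite /= ?add0n ?add1n !expnS; apply/eqP; ring.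
Qed.

End ForestColorings.

Lemma leq_nth_sumn (s : seq nat) i : nth 0 s i <= sumn s.
Proof. by elim: s i => [|x s IH] [|i] //=; [exact: leq_addr | rewrite (leq_trans (IH i)) ?leq_addl]. Qed.

Section PathForest.

Variable mu : seq nat.

(* P_mu as a forest: each path is rooted at its first vertex (i, 0), and the
   parent of (i, j.+1) is (i, j). *)
Definition path_par (v : pathvert mu) : pathvert mu :=
  let: exist x ltj := v in
  exist (fun x : 'I_(size mu) * 'I_(sumn mu) => x.2 < nth 0 mu x.1)
    (x.1, Ordinal (leq_ltn_trans (leq_pred x.2) (ltn_ord x.2)))
    (leq_ltn_trans (leq_pred x.2) ltj).

Definition path_root : pred (pathvert mu) := fun v => (val v).2 == 0 :> nat.

Definition path_pos (v : pathvert mu) : nat := (val v).2.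

Lemma path_par_path v : (val (path_par v)).1 = (val v).1.
Proof. by case: v => [[i j] ?]. Qed.

Lemma path_pos_par v : path_pos (path_par v) = (path_pos v).-1.
Proof. by case: v => [[i j] ?]. Qed.

Lemma path_pos_par_lt v : ~~ path_root v -> path_pos (path_par v) < path_pos v.
Proof. by rewrite path_pos_par /path_root /path_pos; case: (nat_of_ord _). Qed.

Lemma path_par_succ (u w : pathvert mu) :
  (val u).1 = (val w).1 -> ((val u).2).+1 = (val w).2 :> nat -> path_par w = u.
Proof.
move=> same succ; apply: val_inj; move: same succ.
case: u w => [[i j] ?] [[i' j'] ?] /= -> succ.
by congr (_, _); apply: val_inj; rewrite /= -succ.
Qed.

Lemma pathadj_proper_par N (k : {ffun pathvert mu -> 'I_N}) :
  [forall u, forall w, pathadj u w ==> (k u != k w)] =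
  [forall v, ~~ path_root v ==> (k v != k (path_par v))].
Proof.
apply/forallP/forallP => proper v.
- apply/implyP => rv; have /forallP /(_ v) /implyP := proper (path_par v).
  rewrite eq_sym; apply; rewrite /pathadj path_par_path eqxx.
  have := path_pos_par v; rewrite /path_pos => ->.
  by move: rv; rewrite /path_root; case: (nat_of_ord _) => //= n _; rewrite eqxx.
- apply/forallP => w; apply/implyP => /andP[/eqP same /orP[] /eqP succ].
  + have /implyP := proper w; rewrite (path_par_succ same succ) eq_sym.
    by apply; rewrite /path_root -succ.
  + have /implyP := proper v; rewrite (path_par_succ (esym same) succ).
    by apply; rewrite /path_root -succ.
Qed.

Lemma card_pathvert_pos (Q : pred 'I_(sumn mu)) :
  #|[set v : pathvert mu | Q (val v).2]| =
  \sum_(i < size mu) #|[set j : 'I_(sumn mu) | (j < nth 0 mu i) && Q j]|.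
Proof.
rewrite -(card_imset _ val_inj).
have -> : [set val v | v in [set v : pathvert mu | Q (val v).2]] =
          [set x : 'I_(size mu) * 'I_(sumn mu) | (x.2 < nth 0 mu x.1) && Q x.2].
  apply/setP => x; rewrite inE; apply/imsetP/idP.
  - by move=> [v]; rewrite inE => Qv ->; rewrite Qv (valP v).
  - by move=> /andP[ltx Qx]; exists (exist _ x ltx); rewrite ?inE.
rewrite -sum1_card big_mkcond /=; set S := [set x | _].
transitivity (\sum_(i < size mu) \sum_(j < sumn mu) (if (i, j) \in S then 1 else 0)).
  by rewrite pair_bigA; apply: eq_bigr => -[i j].
apply: eq_bigr => i _; rewrite -sum1_card [RHS]big_mkcond /=.
by apply: eq_bigr => j _; rewrite !inE.
Qed.

Lemma card_pathvert : #|{: pathvert mu}| = sumn mu.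
Proof.
transitivity #|[set v : pathvert mu | xpredT (val v).2]|.
  by apply: eq_card => v; rewrite !inE.
rewrite (card_pathvert_pos xpredT).
transitivity (\sum_(i < size mu) nth 0 mu i); last by rewrite sumnE (big_nth 0) big_mkord.
apply: eq_bigr => i _; rewrite -[RHS](card_ord_ltn (leq_nth_sumn mu i)).
by apply: eq_card => j; rewrite !inE andbT.
Qed.

Lemma card_path_roots : all (fun k => 0 < k) mu ->
  #|[set v : pathvert mu | path_root v]| = size mu.
Proof.
move=> /allP mu_pos; rewrite (card_pathvert_pos (fun j => j == 0 :> nat)).
rewrite -[RHS]card_ord -sum1_card; apply: eq_bigr => i _.
have nth_gt0 : 0 < nth 0 mu i by apply/mu_pos/mem_nth.
have sumn_gt0 : 0 < sumn mu := leq_trans nth_gt0 (leq_nth_sumn mu i).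
rewrite -(cards1 (Ordinal sumn_gt0)); apply: eq_card => j; rewrite !inE.
by apply/andP/eqP => [[_ /eqP j0]|->] //; apply: val_inj.
Qed.

Lemma card_path_colorings N M : M <= N -> all (fun k => 0 < k) mu ->
  #|[set k : {ffun pathvert mu -> 'I_N} |
      [forall u, forall w, pathadj u w ==> (k u != k w)] && [forall v, k v < M]]|
  = M ^ size mu * M.-1 ^ (sumn mu - size mu).
Proof.
move=> leMN mu_pos.
have := card_forest_colorings path_pos_par_lt leMN (A := setT) (fun u _ _ => in_setT _).
have -> : [set u in [set: pathvert mu] | path_root u] = [set u | path_root u].
  by apply/setP => u; rewrite !inE.
have cardC_roots : #|[set u in [set: pathvert mu] | ~~ path_root u]| = sumn mu - size mu.
  have /(congr1 (subn^~ (size mu))) := cardsC [set u | path_root u].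
  rewrite card_path_roots // card_pathvert addKn => <-.
  by apply: eq_card => u; rewrite !inE.
rewrite card_path_roots // cardC_roots setCT cards0 expn0 muln1 => <-.
apply: eq_card => k; rewrite !inE pathadj_proper_par.
apply/andP/forall_inP => [[/forallP proper /forallP below] v _|ok].
  by rewrite below; apply: proper.
by split; apply/forallP => v; have /andP[] := ok v (in_setT v).
Qed.

End PathForest.

Import GRing.Theory Num.Theory.
Local Open Scope ring_scope.

Lemma size_leq_sumn (mu : seq nat) : all (fun k => 0 < k)%N mu -> (size mu <= sumn mu)%N.
Proof. by elim: mu => //= k mu IH /andP[k_gt0 /IH]; rewrite -add1n; apply: leq_add. Qed.

Definition prefix_point N M (y : rat) : 'I_N -> rat := fun i => if (i < M)%N then y else 0%R.

Lemma meval_psum N M y k : (M <= N)%N -> (0 < k)%N ->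
  (psum N k).@[prefix_point M y] = M%:R * y ^+ k.
Proof.
move=> leMN k_gt0; rewrite /psum rmorph_sum /=.
under eq_bigr do rewrite rmorphXn /= mevalXU /prefix_point.
transitivity (\sum_(i < N | (i < M)%N) y ^+ k).
  by rewrite [RHS]big_mkcond; apply: eq_bigr => i _; case: ifP; rewrite ?expr0n ?gtn_eqF.
by rewrite -(big_ord_widen N (fun _ => y ^+ k) leMN) sumr_const card_ord mulr_natl.
Qed.

Lemma meval_powersum N M y l : (M <= N)%N -> all (fun k => 0 < k)%N l ->
  (powersum N l).@[prefix_point M y] = M%:R ^+ size l * y ^+ sumn l.
Proof.
move=> leMN; rewrite /powersum; elim: l => [|k l IH] /=.
  by rewrite big_nil meval1 !expr0 mulr1.
move=> /andP[k_gt0 l_pos]; rewrite big_cons rmorphM /= IH // meval_psum //.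
by rewrite exprS exprD; ring.
Qed.

Lemma meval_chromsym N M y (V : finType) (e : rel V) :
  (chromsym N e).@[prefix_point M y] =
  #|[set k : {ffun V -> 'I_N} |
     [forall u, forall v, e u v ==> (k u != k v)] && [forall v, k v < M]%N]|%:R
  * y ^+ #|V|.
Proof.
rewrite /chromsym rmorph_sum /= -sum1dep_card natr_sum mulr_suml big_mkcondr /=.
apply: eq_bigr => k _; rewrite rmorph_prod /=.
under eq_bigr do rewrite mevalXU /prefix_point.
case: (boolP [forall v, k v < M]%N) => [/forallP below|/forallPn [v above]].
  by rewrite mul1r (eq_bigr (fun _ => y)) ?prodr_const // => v _; rewrite below.
by rewrite (bigD1 v) //= ifN // mul0r.
Qed.

Definition path_chrompoly (mu : seq nat) : {poly rat} :=
  'X^(size mu) * ('X - 1) ^+ (sumn mu - size mu).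

Lemma size_path_chrompoly mu : (size mu <= sumn mu)%N ->
  (size (path_chrompoly mu) <= (sumn mu).+1)%N.
Proof.
move=> le_size_sumn; rewrite /path_chrompoly -polyC1.
apply: (leq_trans (size_mul_leq _ _)); rewrite size_polyXn size_exp_XsubC; lia.
Qed.

Lemma horner_path_chrompoly_nat mu M : all (fun k => 0 < k)%N mu ->
  (path_chrompoly mu).[M%:R] = (M ^ size mu * M.-1 ^ (sumn mu - size mu))%:R.
Proof.
move=> mu_pos; rewrite hornerM hornerXn horner_exp hornerD hornerN hornerX hornerC.
case: M => [|M]; last by rewrite natrM !natrX mulrSr addrK.
by case: mu mu_pos => [|k mu] //= _; rewrite expr0n mul0r exp0n.
Qed.

Lemma meval_XP N M y mu : (M <= N)%N -> all (fun k => 0 < k)%N mu ->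
  (XP N mu).@[prefix_point M y] = (path_chrompoly mu).[M%:R] * y ^+ sumn mu.
Proof.
move=> leMN mu_pos; rewrite meval_chromsym card_pathvert.
by rewrite (card_path_colorings leMN mu_pos) horner_path_chrompoly_nat.
Qed.

Lemma poly_eq0_nat_roots (p : {poly rat}) n : (size p <= n.+1)%N ->
  (forall M, (M <= n)%N -> p.[M%:R] = 0) -> p = 0.
Proof.
move=> size_p roots_p.
apply: (@roots_geq_poly_eq0 _ p [seq M%:R | M <- iota 0 n.+1]).
- apply/allP => z /mapP[M]; rewrite mem_iota add0n ltnS => /roots_p pM ->.
  exact/eqP.
- by rewrite map_inj_uniq ?iota_uniq // => i j /eqP; rewrite eqr_nat => /eqP.
- by rewrite size_map size_iota.
Qed.

Lemma poly_eq0_off1 (p : {poly rat}) : (forall x, x != 1 -> p.[x] = 0) -> p = 0.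
Proof.
move=> roots_p.
apply: (@roots_geq_poly_eq0 _ p [seq n.+2%:R | n <- iota 0 (size p)]).
- apply/allP => z /mapP[n _ ->]; apply/eqP/roots_p.
  by rewrite -[1]/(1%:R) eqr_nat.
- by rewrite map_inj_uniq ?iota_uniq // => i j /eqP; rewrite eqr_nat => /eqP [].
- by rewrite size_map size_iota.
Qed.

Section Dehomogenize.

Variables (x : rat) (mu : seq nat).
Hypothesis x_neq1 : x != 1.
Hypothesis le_size_sumn : (size mu <= sumn mu)%N.

Let x1_neq0 : x - 1 != 0. Proof. by rewrite subr_eq0. Qed.

Lemma dehomogenize_path_chrompoly :
  (x - 1) ^+ sumn mu * (path_chrompoly mu).[x / (x - 1)] = x ^+ size mu.
Proof.
rewrite hornerM hornerXn horner_exp hornerD hornerN hornerX hornerC.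
have -> : x / (x - 1) - 1 = (x - 1)^-1.
  by apply: (mulIf x1_neq0); rewrite mulrBl divfK // mulVf // mul1r opprB addrCA subrr addr0.
rewrite -{1}(subnKC le_size_sumn) exprD mulrACA -!exprMn divff // expr1n mulr1.
by rewrite mulrC divfK.
Qed.

Lemma dehomogenize_Xn :
  (x - 1) ^+ sumn mu * (x / (x - 1)) ^+ size mu = (path_chrompoly mu).[x].
Proof.
rewrite hornerM hornerXn horner_exp hornerD hornerN hornerX hornerC.
by rewrite -{1}(subnKC le_size_sumn) exprD mulrAC -exprMn mulrCA divff // mulr1.
Qed.

End Dehomogenize.

Section Expansion.

Variables (lambda : seq nat) (N : nat) (s : seq (seq nat)) (a : seq nat -> rat).
Hypothesis lambda_pos : all (fun k => 0 < k)%N lambda.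
Hypothesis s_pos : forall mu, mu \in s -> all (fun k => 0 < k)%N mu.
Hypothesis sumn_lambda_le : (sumn lambda <= N)%N.
Hypothesis sumn_s_le : forall mu, mu \in s -> (sumn mu <= N)%N.
Hypothesis expansion : powersum N lambda = \sum_(mu <- s) a mu *: XP N mu.

Lemma path_chrompoly_expansion y :
  \sum_(mu <- s) (a mu * y ^+ sumn mu) *: path_chrompoly mu =
  y ^+ sumn lambda *: 'X^(size lambda).
Proof.
apply/eqP; rewrite -subr_eq0; apply/eqP.
apply: (@poly_eq0_nat_roots _ N) => [|M le_MN].
  rewrite (leq_trans (size_polyD _ _)) // geq_max size_polyN; apply/andP; split.
    rewrite big_seq (big_ind (fun p : {poly rat} => size p <= N.+1)%N) ?size_poly0 //.
      by move=> p q sp sq; rewrite (leq_trans (size_polyD _ _)) // geq_max sp sq.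
    move=> mu s_mu; rewrite (leq_trans (size_scale_leq _ _)) //.
    by rewrite (leq_trans (size_path_chrompoly (size_leq_sumn (s_pos s_mu)))) ?ltnS ?sumn_s_le.
  rewrite (leq_trans (size_scale_leq _ _)) // size_polyXn ltnS.
  exact: leq_trans (size_leq_sumn lambda_pos) sumn_lambda_le.
apply/eqP; rewrite hornerD hornerN subr_eq0 horner_sum hornerZ hornerXn.
have := congr1 (meval (prefix_point M y)) expansion.
rewrite meval_powersum // rmorph_sum /= mulrC => ->.
rewrite big_seq [X in _ == X]big_seq; apply/eqP/eq_bigr => mu s_mu.
by rewrite mevalZ meval_XP ?s_pos // hornerZ; ring.
Qed.

Lemma sum_Xn_eq_path_chrompoly :
  \sum_(mu <- s) a mu *: 'X^(size mu) = path_chrompoly lambda.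
Proof.
apply/eqP; rewrite -subr_eq0; apply/eqP; apply: poly_eq0_off1 => x x_neq1.
rewrite hornerD hornerN horner_sum; apply/eqP; rewrite subr_eq0; apply/eqP.
rewrite -(dehomogenize_Xn x_neq1 (size_leq_sumn lambda_pos)).
have := congr1 (horner^~ (x / (x - 1))) (path_chrompoly_expansion (x - 1)).
rewrite hornerZ hornerXn => <-; rewrite horner_sum big_seq [RHS]big_seq.
apply: eq_bigr => mu s_mu; rewrite !hornerZ hornerXn -mulrA.
by rewrite dehomogenize_path_chrompoly // size_leq_sumn ?s_pos.
Qed.

End Expansion.

Theorem proposition4p2 (lambda : seq nat) (N : nat) (s : seq (seq nat))
    (a : seq nat -> rat) :
  is_partition lambda -> uniq s -> all is_partition s ->
  (sumn lambda <= N)%N -> all (fun mu => sumn mu <= N)%N s ->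
  powersum N lambda = \sum_(mu <- s) a mu *: XP N mu ->
  (\sum_(mu <- s) a mu *: 'X^(size mu) : {poly rat})
    = 'X^(size lambda) * ('X - 1) ^+ (sumn lambda - size lambda).
Proof.
move=> /andP[_ lambda_pos] _ /allP s_part sumn_lambda_le /allP sumn_s_le expansion.
have s_pos mu : mu \in s -> all (fun k => 0 < k)%N mu by move/s_part/andP=> [].
exact: sum_Xn_eq_path_chrompoly expansion.
Qed.
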